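(* Let $M\ge1$ be an integer, let $\lambda,\omega,T>0$, $\alpha,\beta\ge0$, and let $f_0\ge f^*$ be reals. For $\rho\in[0,1)$ satisfying $\lambda<\frac{1-\sqrt\rho}{6\sqrt M\,\omega}$ define $$G(\rho)=\frac{M\lambda^2\omega^2}{(1-\sqrt\rho)^2-18M\lambda^2\omega^2},\qquad B(\rho)=\frac{1}{\tfrac12-9G(\rho)}\left(\frac{f_0-f^*}{\lambda T}+\frac{\lambda\omega\alpha^2}{2M}+\alpha^2G(\rho)+9\beta^2G(\rho)\right).$$ Then $B$ is a monotonically increasing function of $\rho$ on this domain.
   Context: $B(\rho)$ is the right-hand side of the paper's ergodic convergence bound for decentralized federated learning, with $\rho=\rho(\overline{\mathbf W^2})=\max\{\lambda_2(\overline{\mathbf W^2}),-\lambda_M(\overline{\mathbf W^2})\}$, the second-largest-in-magnitude eigenvalue of the expected squared mixing matrix; $M$ is the number of devices, $\lambda$ the learning rate, $\omega$ the gradient Lipschitz constant, $\alpha^2,\beta^2$ variance bounds, $T$ the number of rounds, $f_0$ the initial and $f^*$ the optimal loss value. *)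

From Stdlib Require Import Reals.
Open Scope R_scope.

Definition Gfun (M : nat) (lam om rho : R) : R :=
  INR M * lam ^ 2 * om ^ 2 / ((1 - sqrt rho) ^ 2 - 18 * INR M * lam ^ 2 * om ^ 2).

Definition Bfun (M : nat) (lam om T alpha beta f0 fstar rho : R) : R :=
  / (1 / 2 - 9 * Gfun M lam om rho) *
  ((f0 - fstar) / (lam * T) + lam * om * alpha ^ 2 / (2 * INR M)
   + alpha ^ 2 * Gfun M lam om rho + 9 * beta ^ 2 * Gfun M lam om rho).

Definition admissible (M : nat) (lam om rho : R) : Prop :=
  0 <= rho < 1 /\ lam < (1 - sqrt rho) / (6 * sqrt (INR M) * om).

(** Writing [K = M λ² ω²] and [u = (1 - √ρ)²], one has [G = K / (u - 18 K)] and
    [B = 2 C + 2 K (18 C + α² + 9 β²) / (u - 36 K)], where [C ≥ 0] collects the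
    [ρ]-free terms.  Admissibility of [ρ] says exactly that [u > 36 K], and [u]
    decreases as [ρ] grows, so [B] increases. *)

From Stdlib Require Import Reals Lra Psatz.
Open Scope R_scope.

Lemma bound_closed_form (K u C a b : R) : 0 <= K -> 36 * K < u ->
  / (1 / 2 - 9 * (K / (u - 18 * K))) *
  (C + a * (K / (u - 18 * K)) + 9 * b * (K / (u - 18 * K)))
  = 2 * C + 2 * K * (18 * C + a + 9 * b) / (u - 36 * K).
Proof.
  intros HK Hu.
  assert (Hhalf : 1 / 2 - 9 * (K / (u - 18 * K)) = (u - 36 * K) / (2 * (u - 18 * K)))
    by (field; lra).
  rewrite Hhalf.
  field; lra.
Qed.

Lemma sqr_one_sub_sqrt_le (r1 r2 : R) : r1 <= r2 -> r2 <= 1 ->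
  (1 - sqrt r2) ^ 2 <= (1 - sqrt r1) ^ 2.
Proof.
  intros H12 H2.
  assert (Hs12 : sqrt r1 <= sqrt r2) by (apply sqrt_le_1_alt; exact H12).
  assert (Hs2 : sqrt r2 <= 1) by (rewrite <- sqrt_1; apply sqrt_le_1_alt; exact H2).
  pose proof (sqrt_pos r1).
  nra.
Qed.

Lemma admissible_gap (M : nat) (lam om rho : R) : (0 < M)%nat -> 0 < lam -> 0 < om ->
  admissible M lam om rho -> 36 * (INR M * lam ^ 2 * om ^ 2) < (1 - sqrt rho) ^ 2.
Proof.
  intros HM Hlam Hom [_ Hadm].
  assert (HsM : 0 < sqrt (INR M)) by (apply sqrt_lt_R0, lt_0_INR; lia).
  set (c := 6 * sqrt (INR M) * om) in Hadm.
  assert (Hc : 0 < c) by (unfold c; nra).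
  assert (Hlc : lam * c < 1 - sqrt rho).
  { replace (1 - sqrt rho) with ((1 - sqrt rho) / c * c) by (field; lra).
    apply Rmult_lt_compat_r; assumption. }
  assert (Hsq : (lam * c) ^ 2 = 36 * (INR M * lam ^ 2 * om ^ 2)).
  { rewrite <- (sqrt_sqrt (INR M)) by apply pos_INR.
    unfold c; ring. }
  rewrite <- Hsq.
  assert (0 < lam * c) by (apply Rmult_lt_0_compat; assumption).
  nra.
Qed.

Theorem proposition1 (M : nat) (lam om T alpha beta f0 fstar : R) :
  (1 <= M)%nat -> 0 < lam -> 0 < om -> 0 < T -> 0 <= alpha -> 0 <= beta ->
  fstar <= f0 ->
  forall rho1 rho2 : R,
    admissible M lam om rho1 -> admissible M lam om rho2 -> rho1 <= rho2 ->
    Bfun M lam om T alpha beta f0 fstar rho1 <= Bfun M lam om T alpha beta f0 fstar rho2.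
Proof.
  intros HM Hlam Hom HT Halpha Hbeta Hf rho1 rho2 Hadm1 Hadm2 H12.
  assert (HMpos : 0 < INR M) by (apply lt_0_INR; lia).
  pose proof (admissible_gap M lam om rho1 HM Hlam Hom Hadm1) as Hgap1.
  pose proof (admissible_gap M lam om rho2 HM Hlam Hom Hadm2) as Hgap2.
  pose proof (sqr_one_sub_sqrt_le rho1 rho2 H12 (Rlt_le _ _ (proj2 (proj1 Hadm2)))) as Hmono.
  set (K := INR M * lam ^ 2 * om ^ 2) in *.
  set (C := (f0 - fstar) / (lam * T) + lam * om * alpha ^ 2 / (2 * INR M)).
  assert (HK : 0 <= K)
    by (unfold K; apply Rmult_le_pos; [apply Rmult_le_pos|]; auto using pos_INR, pow2_ge_0).
  assert (HC : 0 <= C).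
  { unfold C, Rdiv.
    assert (0 < / (lam * T)) by (apply Rinv_0_lt_compat; nra).
    assert (0 < / (2 * INR M)) by (apply Rinv_0_lt_compat; lra).
    assert (0 <= lam * om * alpha ^ 2) by (apply Rmult_le_pos; nra).
    nra. }
  unfold Bfun, Gfun.
  replace (18 * INR M * lam ^ 2 * om ^ 2) with (18 * K) by (unfold K; ring).
  fold K C.
  rewrite !bound_closed_form by assumption.
  apply Rplus_le_compat_l, Rmult_le_compat_l.
  - nra.
  - apply Rinv_le_contravar; lra.
Qed.
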